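(* Consider the discrete-time control system $x_{k+1}=f(x_k,u_k)$ with the reward $r(x,u)=R-x^TQx$ and the optimal value function $V_\gamma(x)=\sup_{\mathbf u}\sum_{k=0}^\infty\gamma^k r(\Psi(k,x,\mathbf u(k)),\mathbf u(k))$, under the standing assumptions (A1)–(A3) in the context. Then there exist $\alpha_1,\alpha_2\in\mathcal K_\infty$, a constant $\gamma^\star\in(0,1)$ and a constant $c>0$ such that for every $\gamma\in(\gamma^\star,1)$: (i) $\alpha_1(\|x\|)\le \frac{R}{1-\gamma}-V_\gamma(x)\le \alpha_2(\|x\|)$ for all $x\in\mathbb R^n$; and (ii) $V_\gamma(x)-V_\gamma(y)\le -c\|x\|^2$ for all $x\in\mathbb R^n$, where $y=f(x,u^\star_1(x))$ and $u^\star_1(x)$ is the first control input of an optimal control sequence $\mathbf u^\star$ for the initial condition $x$ (i.e. one attaining $V_\gamma(x)$).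
   Context: System: $x_{k+1}=f(x_k,u_k)$ with states $x_k\in\mathbb R^n$ (in the paper, in a compact convex set $D\subset\mathbb R^n$) and inputs $u_k\in\mathcal U\subset\mathbb R^m$; the origin is an equilibrium. For an infinite control sequence $\mathbf u=(u_1,u_2,\dots)$, $\Psi(k,x_0,\mathbf u(k))$ denotes the state at time $k$ starting from $x_0$ (flow map). (A1) $f$ is Lipschitz: $\|f(x,u)-f(y,w)\|\le L_x\|x-y\|+L_u\|u-w\|$. The reward is $r(x,u)=R-x^TQx$ with a constant $R>0$ and a positive definite matrix $Q$. For $\gamma\in(0,1)$ the discounted objective is $\mathbf J^{\mathbf u}_\gamma(x_0)=\sum_{k=0}^\infty \gamma^k r(\Psi(k,x_0,\mathbf u(k)),\mathbf u(k))$ and $V_\gamma(x_0)=\sup_{\mathbf u}\mathbf J^{\mathbf u}_\gamma(x_0)$. (A2) For every initial condition $x_0\in\mathbb R^n$ there exists a control sequence $\mathbf u^\star$ with $V_\gamma(x_0)=\mathbf J^{\mathbf u^\star}_\gamma(x_0)$. (A3) There is a constant $a_V$ such that $\frac{R}{1-\gamma}-V_\gamma(x)\le a_V\|x\|^2$ for all $\gamma\in(0,1)$ and $x\in\mathbb R^n$. A function $\alpha:\mathbb R_{\ge0}\to\mathbb R_{\ge0}$ is of class $\mathcal K_\infty$ if it is continuous, zero at zero, strictly increasing and unbounded. *)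

From HB Require Import structures.
From mathcomp Require Import all_boot all_order all_algebra.
From mathcomp Require Import all_classical all_reals all_analysis.
Set Implicit Arguments. Unset Strict Implicit. Unset Printing Implicit Defensive.
Import Order.TTheory GRing.Theory Num.Theory numFieldNormedType.Exports.
Local Open Scope classical_set_scope.
Local Open Scope ring_scope.

Definition enorm {R : realType} {p : nat} (x : 'rV[R]_p) : R :=
  Num.sqrt (\sum_(i < p) (x 0 i) ^+ 2).

(* quadratic form x^T Q x (x a row vector, so x Q x^T) *)
Definition qform {R : realType} {n : nat} (Q : 'M[R]_n) (x : 'rV[R]_n) : R :=
  (x *m Q *m x^T) 0 0.

Definition posdef {R : realType} {n : nat} (Q : 'M[R]_n) : Prop :=
  forall x : 'rV[R]_n, x != 0 -> 0 < qform Q x.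

Fixpoint Psi {R : realType} {n m : nat} (f : 'rV[R]_n -> 'rV[R]_m -> 'rV[R]_n)
  (k : nat) (x0 : 'rV[R]_n) (u : nat -> 'rV[R]_m) : 'rV[R]_n :=
  match k with
  | 0 => x0
  | k'.+1 => f (Psi f k' x0 u) (u k')
  end.

Definition reward {R : realType} {n m : nat} (Rc : R) (Q : 'M[R]_n)
  (x : 'rV[R]_n) (u : 'rV[R]_m) : R := Rc - qform Q x.

Definition admissible {R : realType} {m : nat} (U : set 'rV[R]_m) :
  set (nat -> 'rV[R]_m) := [set u | forall k, U (u k)].

Definition Jobj {R : realType} {n m : nat} (f : 'rV[R]_n -> 'rV[R]_m -> 'rV[R]_n)
  (Rc : R) (Q : 'M[R]_n) (g : R) (u : nat -> 'rV[R]_m) (x0 : 'rV[R]_n) : \bar R :=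
  (\sum_(0 <= k <oo) ((g ^+ k * reward Rc Q (Psi f k x0 u) (u k))%:E))%E.

Definition Vopt {R : realType} {n m : nat} (f : 'rV[R]_n -> 'rV[R]_m -> 'rV[R]_n)
  (U : set 'rV[R]_m) (Rc : R) (Q : 'M[R]_n) (g : R) (x0 : 'rV[R]_n) : \bar R :=
  ereal_sup [set Jobj f Rc Q g u x0 | u in admissible U].

Definition K_inf {R : realType} (a : R -> R) : Prop :=
  {within [set` `[0%R, +oo[%R], continuous a} /\ a 0 = 0 /\
  (forall s t, 0 <= s -> s < t -> a s < a t) /\
  (forall M : R, exists s, 0 <= s /\ M < a s).

From HB Require Import structures.
From mathcomp Require Import all_boot all_order all_algebra.
From mathcomp Require Import all_classical all_reals all_analysis.
From mathcomp Require Import ring lra.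
Set Implicit Arguments. Unset Strict Implicit. Unset Printing Implicit Defensive.
Import Order.TTheory GRing.Theory Num.Theory numFieldNormedType.Exports.
Local Open Scope classical_set_scope.
Local Open Scope ring_scope.

(** Since r(x,u) = R - x^T Q x, every objective splits as
    J^u(x) = R/(1-g) - C^u(x), with C^u(x) = sum_k g^k x_k^T Q x_k the
    discounted quadratic cost; hence R/(1-g) - V(x) is the cost of an optimal
    sequence.  That cost is at least x^T Q x >= lam |x|^2, where lam > 0 is
    the minimum of the form on the (compact) unit sphere, and at most
    a_V |x|^2 by (A3).  Along an optimal sequence the cost satisfies
    C(x) = x^T Q x + g C'(y), where C'(y) is the cost of the shifted
    sequence, which is admissible from y; so V(y) >= R/(1-g) - C'(y) and
    V(x) - V(y) <= (1-g) C'(y) - x^T Q x.  As g C'(y) <= C(x) <= a_V |x|^2,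
    the first term is at most lam |x|^2 / 2 once g is close enough to 1. *)

Lemma continuous_sum (R : realType) (T : topologicalType) (I : Type)
    (r : seq I) (F : I -> T -> R) :
  (forall i, continuous (F i)) -> continuous (fun x => \sum_(i <- r) F i x).
Proof. by move=> cF; apply: continuous_big => //; exact: add_continuous. Qed.

Section EuclideanNorm.
Variables (R : realType) (n : nat).
Implicit Types x : 'rV[R]_n.

Lemma sum_sqr_ge0 x : 0 <= \sum_(i < n) x 0 i ^+ 2.
Proof. by apply: sumr_ge0 => i _; exact: sqr_ge0. Qed.

Lemma enorm_sqr x : enorm x ^+ 2 = \sum_(i < n) x 0 i ^+ 2.
Proof. by rewrite /enorm sqr_sqrtr // sum_sqr_ge0. Qed.

Lemma sum_sqrZ a x :
  \sum_(i < n) (a *: x) 0 i ^+ 2 = a ^+ 2 * \sum_(i < n) x 0 i ^+ 2.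
Proof. by rewrite mulr_sumr; apply: eq_bigr => i _; rewrite mxE exprMn. Qed.

Lemma continuous_sum_sqr : continuous (fun x : 'rV[R]_n => \sum_(i < n) x 0 i ^+ 2).
Proof. by apply: continuous_sum => i x; apply: continuousM; exact: coord_continuous. Qed.

Lemma unit_sphere_compact : compact [set x : 'rV[R]_n | \sum_(i < n) x 0 i ^+ 2 = 1].
Proof.
apply: bounded_closed_compact; last first.
  rewrite (_ : [set x | _ = 1] =
    (fun x : 'rV[R]_n => \sum_(i < n) x 0 i ^+ 2) @^-1` [set 1]) //.
  apply: preimage_closed; last exact: closed_eq.
  by move=> x _; exact: continuous_sum_sqr.
have coord_le1 x i j : \sum_(k < n) x 0 k ^+ 2 = 1 -> `|x i j| <= 1.
  move=> x1; have : x i j ^+ 2 <= 1.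
    rewrite -x1 (ord1 i) (bigD1 j) //= lerDl.
    by apply: sumr_ge0 => k _; exact: sqr_ge0.
  by rewrite -real_normK ?num_real //; have := normr_ge0 (x i j); nra.
rewrite /bounded_set /= /bounded_near; near=> M.
have M1 : 1 <= M by near: M; apply: nbhs_pinfty_ge; exact: num_real.
move=> x x1 /=; rewrite [leLHS]/Num.norm /= mx_normrE.
apply: bigmax_le; first exact: le_trans M1.
by move=> [i j] _ /=; exact: le_trans (coord_le1 _ _ _ x1) M1.
Unshelve. all: by end_near.
Qed.

End EuclideanNorm.

Section QuadraticForm.
Variables (R : realType) (n : nat) (Q : 'M[R]_n).

Lemma qformE x : qform Q x = \sum_(j < n) (\sum_(k < n) x 0 k * Q k j) * x 0 j.
Proof. by rewrite /qform !mxE; apply: eq_bigr => j _; rewrite !mxE. Qed.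

Lemma qformZ a x : qform Q (a *: x) = a ^+ 2 * qform Q x.
Proof.
rewrite !qformE big_distrr /=; apply: eq_bigr => j _.
rewrite mxE (eq_bigr (fun k => a * (x 0 k * Q k j))); last first.
  by move=> k _; rewrite mxE mulrA.
by rewrite -mulr_sumr; ring.
Qed.

Lemma qform0 : qform Q 0 = 0.
Proof. by rewrite -(scale0r 0) qformZ expr0n mul0r. Qed.

Lemma qform_continuous : continuous (qform Q).
Proof.
rewrite (_ : qform Q = fun x => \sum_(j < n) (\sum_(k < n) x 0 k * Q k j) * x 0 j).
  apply: continuous_sum => j x; apply: continuousM; last exact: coord_continuous.
  move: x; apply: continuous_sum => k y; apply: continuousM.
    exact: coord_continuous.
  exact: cst_continuous.
by apply/funext => x; rewrite qformE.
Qed.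

Hypothesis posQ : posdef Q.

Lemma qform_ge0 x : 0 <= qform Q x.
Proof. by have [->|/posQ/ltW//] := eqVneq x 0; rewrite qform0. Qed.

Lemma qform_sphere_lower_bound (lam : R) :
    0 <= lam -> (forall y : 'rV[R]_n, \sum_(i < n) y 0 i ^+ 2 = 1 -> lam <= qform Q y) ->
  forall x, lam * enorm x ^+ 2 <= qform Q x.
Proof.
move=> lam0 lam_le x; rewrite enorm_sqr.
set S := \sum_(i < n) x 0 i ^+ 2.
have [->|S_neq0] := eqVneq S 0; first by rewrite mulr0 qform_ge0.
have S_gt0 : 0 < S by rewrite lt_neqAle eq_sym S_neq0 sum_sqr_ge0.
have := lam_le ((Num.sqrt S)^-1 *: x).
rewrite qformZ sum_sqrZ -/S exprVn sqr_sqrtr ?(ltW S_gt0) // mulVf // => /(_ erefl).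
by rewrite -ler_pdivlMr // mulrC.
Qed.

Lemma posdef_coercive :
  exists2 lam, 0 < lam & forall x, lam * enorm x ^+ 2 <= qform Q x.
Proof.
set S := [set x : 'rV[R]_n | \sum_(i < n) x 0 i ^+ 2 = 1].
have [[y Sy]|S0] := pselect (S !=set0); last first.
  by exists 1 => //; apply: qform_sphere_lower_bound => // y Sy; case: S0; exists y.
have [c /set_mem Sc cmin] := EVT_min_rV (ex_intro _ y Sy) (@unit_sphere_compact R n)
  (continuous_subspaceT qform_continuous).
have c_neq0 : c != 0.
  apply: contra_eqN Sc => /eqP ->; rewrite /S /=.
  by rewrite big1 ?(eq_sym 0) ?oner_eq0 // => i _; rewrite mxE expr0n.
exists (qform Q c); first exact: posQ.
apply: qform_sphere_lower_bound; first exact: qform_ge0.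
by move=> z Sz; apply: cmin; rewrite inE.
Qed.

End QuadraticForm.

Section NonnegativeSeries.
Variable R : realType.
Local Open Scope ereal_scope.

Lemma eseries_geometricB (a b : nat -> R) (c z : R) :
    (forall k, a k = c * z ^+ k - b k)%R -> (forall k, 0 <= b k)%R -> (0 <= z < 1)%R ->
  \sum_(0 <= k <oo) (a k)%:E = (c / (1 - z))%:E - \sum_(0 <= k <oo) (b k)%:E.
Proof.
move=> aE b_ge0 /andP[z_ge0 z_lt1]; apply: cvg_lim => //.
rewrite (_ : (fun N => _) =
    (fun N => (series (geometric c z) N)%:E - \sum_(0 <= k < N) (b k)%:E)); last first.
  apply/funext => N; rewrite !sumEFin -EFinB /series /= -sumrB.
  by congr (_%:E); apply: eq_bigr => k _; rewrite aE.
apply: cvgeD; first exact: fin_num_adde_defr.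
  apply/fine_cvgP; split; first exact: nearW.
  by have := @cvg_geometric_series R c z; rewrite ger0_norm //; apply.
have b_cvg : cvgn (fun N => \sum_(0 <= k < N) (b k)%:E).
  by apply: is_cvg_ereal_nneg_natsum => k _; rewrite lee_fin.
exact: cvgeN b_cvg.
Qed.

Lemma eseries_recl (a b : nat -> R) (c : R) :
    (forall k, a k.+1 = c * b k)%R -> (forall k, 0 <= b k)%R -> (0 <= c)%R ->
  \sum_(0 <= k <oo) (a k)%:E = (a 0%N)%:E + c%:E * \sum_(0 <= k <oo) (b k)%:E.
Proof.
move=> aS b_ge0 c_ge0; apply: cvg_lim => //; rewrite -cvg_shiftS /=.
rewrite (_ : (fun N => _) =
    (fun N => (a 0%N)%:E + c%:E * \sum_(0 <= k < N) (b k)%:E)); last first.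
  apply/funext => N; rewrite big_nat_recl //= !sumEFin -EFinM mulr_sumr.
  by congr (_ + _%:E); apply: eq_bigr => k _; rewrite aS.
apply: cvgeD; [exact: fin_num_adde_defr | exact: cvg_cst |].
have b_cvg : cvgn (fun N => \sum_(0 <= k < N) (b k)%:E).
  by apply: is_cvg_ereal_nneg_natsum => k _; rewrite lee_fin.
exact: cvgeZl b_cvg.
Qed.

End NonnegativeSeries.

Lemma K_inf_scaled_sqr (R : realType) (k : R) : 0 < k -> K_inf (fun s => k * s ^+ 2).
Proof.
move=> k_gt0; split; [|split; [|split]].
- apply: continuous_subspaceT => s; apply: cvgM; first exact: cvg_cst.
  exact: exprn_continuous.
- by rewrite expr0n mulr0.
- by move=> s t s_ge0 st; rewrite ltr_pM2l //; nra.
- move=> M; exists (1 + `|M| / k); split.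
    by rewrite addr_ge0 // divr_ge0 // ltW.
  have : k * (`|M| / k) = `|M| by rewrite mulrC divfK // gt_eqF.
  have : 0 <= `|M| / k by rewrite divr_ge0 // ltW.
  move: (`|M| / k) => t t_ge0 kt.
  have ktt : 0 <= k * (t * t) by rewrite mulr_ge0 ?mulr_ge0 // ltW.
  have -> : k * (1 + t) ^+ 2 = k + 2 * (k * t) + k * (t * t) by ring.
  by rewrite kt; have := ler_norm M; have := normr_ge0 M; lra.
Qed.

Lemma PsiS (R : realType) n m (f : 'rV[R]_n -> 'rV[R]_m -> 'rV[R]_n) k x u :
  Psi f k.+1 x u = Psi f k (f x (u 0%N)) (fun j => u j.+1).
Proof. by elim: k => //= k ->. Qed.

Lemma discounted_step_le (R : realFieldType) (lam a g q b E : R) :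
    0 < lam -> 0 < a -> 1 / 2 < g -> 1 - lam / (4 * a) < g ->
    0 <= E -> 0 <= b -> lam * E <= q -> q + g * b <= a * E ->
  (1 - g) * b - q <= - (lam / 2 * E).
Proof.
move=> lam_gt0 a_gt0 g_gt g_near1 E_ge0 b_ge0 qE qbE.
have gb_le : g * b <= a * E.
  have : 0 <= lam * E by rewrite mulr_ge0 // ltW.
  lra.
have b_le : b <= 2 * (a * E).
  have : 0 <= (g - 1 / 2) * b by rewrite mulr_ge0 // subr_ge0 ltW.
  lra.
have : (1 - g) * b <= lam / (4 * a) * (2 * (a * E)).
  apply: le_trans (_ : lam / (4 * a) * b <= _).
    by apply: ler_wpM2r => //; lra.
  by apply: ler_wpM2l => //; rewrite ltW // divr_gt0 // mulr_gt0.
have -> : lam / (4 * a) * (2 * (a * E)) = lam / 2 * E by field; rewrite gt_eqF.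
lra.
Qed.

Section DiscountedCost.
Variables (R : realType) (n m : nat) (f : 'rV[R]_n -> 'rV[R]_m -> 'rV[R]_n).
Variables (U : set 'rV[R]_m) (Rc : R) (Q : 'M[R]_n) (g : R).
Hypotheses (posQ : posdef Q) (g_gt0 : 0 < g) (g_lt1 : g < 1).
Local Open Scope ereal_scope.

Definition cost (u : nat -> 'rV[R]_m) (x : 'rV[R]_n) : \bar R :=
  \sum_(0 <= k <oo) (g ^+ k * qform Q (Psi f k x u))%:E.

Let term_ge0 u x k : (0 <= g ^+ k * qform Q (Psi f k x u))%R.
Proof. by rewrite mulr_ge0 ?exprn_ge0 ?qform_ge0 ?ltW. Qed.

Lemma Jobj_cost u x : Jobj f Rc Q g u x = (Rc / (1 - g))%:E - cost u x.
Proof.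
apply: eseries_geometricB => [k||]; [by rewrite /reward; ring | exact: term_ge0 |].
by rewrite ltW.
Qed.

Lemma cost_ge0 u x : 0 <= cost u x.
Proof. by apply: nneseries_ge0 => k _ _; rewrite lee_fin. Qed.

Lemma cost_recl u x :
  cost u x = (qform Q x)%:E + g%:E * cost (fun k => u k.+1) (f x (u 0%N)).
Proof.
pose b k := (g ^+ k * qform Q (Psi f k (f x (u 0%N)) (fun j => u j.+1)))%R.
rewrite {1}/cost (@eseries_recl _ _ b g).
- by rewrite expr0 mul1r.
- by move=> k; rewrite PsiS exprS mulrA.
- exact: term_ge0.
- exact: ltW.
Qed.

Lemma qform_le_cost u x : (qform Q x)%:E <= cost u x.
Proof. by rewrite cost_recl leeDl // mule_ge0 ?cost_ge0 // lee_fin ltW. Qed.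

Lemma Jobj_le_Vopt u x : admissible U u -> Jobj f Rc Q g u x <= Vopt f U Rc Q g x.
Proof. by move=> adm_u; apply: ereal_sup_ubound; exists u. Qed.

Lemma Vopt_gap u x : Vopt f U Rc Q g x = Jobj f Rc Q g u x ->
  (Rc / (1 - g))%:E - Vopt f U Rc Q g x = cost u x.
Proof.
move=> ->; rewrite Jobj_cost.
by case: (cost u x) => [c| |] //=; rewrite -EFinB; congr _%:E; ring.
Qed.

Lemma Vopt_decrease (lam a : R) u x :
    (0 < lam)%R -> (0 < a)%R -> (1 / 2 < g)%R -> (1 - lam / (4 * a) < g)%R ->
    (lam * enorm x ^+ 2 <= qform Q x)%R ->
    (Rc / (1 - g))%:E - Vopt f U Rc Q g x <= (a * enorm x ^+ 2)%:E ->
    admissible U u -> Vopt f U Rc Q g x = Jobj f Rc Q g u x ->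
  Vopt f U Rc Q g x - Vopt f U Rc Q g (f x (u 0%N)) <= (- (lam / 2 * enorm x ^+ 2))%:E.
Proof.
move=> lam_gt0 a_gt0 g_gt g_near1 qx_ge gap_le adm_u opt_u.
set y := f x (u 0%N); set v := fun k => u k.+1.
have adm_v : admissible U v by move=> k; exact: adm_u.
rewrite (Vopt_gap opt_u) cost_recl -/y -/v in gap_le.
have [b bE] : exists b, cost v y = b%:E.
  move: gap_le (cost_ge0 v y); case: (cost v y) => [b _ _| |//]; first by exists b.
  by rewrite mulry gtr0_sg // mul1e.
rewrite bE in gap_le.
have b_ge0 : (0 <= b)%R by rewrite -lee_fin -bE cost_ge0.
pose C := (Rc / (1 - g))%:E.
apply: le_trans (_ : C - (qform Q x + g * b)%:E - (C - b%:E) <= _).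
  apply: leeB; first by rewrite opt_u Jobj_cost cost_recl -/y -/v bE.
  by rewrite -bE -Jobj_cost Jobj_le_Vopt.
rewrite -EFinM -EFinD lee_fin in gap_le; rewrite -!EFinB lee_fin.
have := discounted_step_le lam_gt0 a_gt0 g_gt g_near1 (sqr_ge0 _) b_ge0 qx_ge gap_le.
by apply: le_trans; lra.
Qed.

End DiscountedCost.

Theorem proposition1 (R : realType) (n m : nat)
  (f : 'rV[R]_n -> 'rV[R]_m -> 'rV[R]_n) (U : set 'rV[R]_m)
  (Rc : R) (Q : 'M[R]_n) (Lx Lu : R)
  (hRc : 0 < Rc) (hQ : posdef Q)
  (hequil : exists u0, U u0 /\ f 0 u0 = 0)
  (A1 : forall x y u w, U u -> U w ->
          enorm (f x u - f y w) <= Lx * enorm (x - y) + Lu * enorm (u - w))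
  (A2 : forall g : R, 0 < g < 1 -> forall x0 : 'rV[R]_n,
          exists2 ustar, admissible U ustar & Vopt f U Rc Q g x0 = Jobj f Rc Q g ustar x0)
  (A3 : exists aV : R, forall g : R, 0 < g < 1 -> forall x : 'rV[R]_n,
          ((Rc / (1 - g))%:E - Vopt f U Rc Q g x <= (aV * enorm x ^+ 2)%:E)%E) :
  exists (a1 a2 : R -> R) (gstar c : R),
    [/\ K_inf a1, K_inf a2, 0 < gstar < 1, 0 < c &
    forall g : R, gstar < g < 1 ->
      (forall x : 'rV[R]_n,
         ((a1 (enorm x))%:E <= (Rc / (1 - g))%:E - Vopt f U Rc Q g x)%E /\
         ((Rc / (1 - g))%:E - Vopt f U Rc Q g x <= (a2 (enorm x))%:E)%E) /\
      (forall (x : 'rV[R]_n) (ustar : nat -> 'rV[R]_m),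
         admissible U ustar -> Vopt f U Rc Q g x = Jobj f Rc Q g ustar x ->
         (Vopt f U Rc Q g x - Vopt f U Rc Q g (f x (ustar 0%N))
            <= (- (c * enorm x ^+ 2))%:E)%E)].
Proof.
have [lam lam_gt0 qform_ge] := posdef_coercive hQ.
have [aV gap_le] := A3.
pose a := Num.max aV 1.
have a_gt0 : 0 < a by rewrite lt_max ltr01 orbT.
have gap_le_a g (g01 : 0 < g < 1) x :
    ((Rc / (1 - g))%:E - Vopt f U Rc Q g x <= (a * enorm x ^+ 2)%:E)%E.
  by rewrite (le_trans (gap_le g g01 x)) // lee_fin ler_wpM2r ?sqr_ge0 // le_max lexx.
have margin_gt0 : 0 < lam / (4 * a) by rewrite divr_gt0 // mulr_gt0.
exists (fun s => lam * s ^+ 2), (fun s => a * s ^+ 2),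
  (Num.max (1 / 2) (1 - lam / (4 * a))), (lam / 2).
split; [exact: K_inf_scaled_sqr | exact: K_inf_scaled_sqr | | by rewrite divr_gt0 |].
  by rewrite lt_max gt_max; apply/andP; split; [apply/orP; left|apply/andP]; lra.
move=> g /andP[]; rewrite gt_max => /andP[g_gt g_near1] g_lt1.
have g_gt0 : 0 < g by lra.
have g01 : 0 < g < 1 by rewrite g_gt0 g_lt1.
split=> [x|x u adm_u opt_u]; last first.
  exact: (Vopt_decrease hQ g_gt0 g_lt1 lam_gt0 a_gt0 g_gt g_near1 (qform_ge x)
            (gap_le_a g g01 x) adm_u opt_u).
split; last exact: gap_le_a.
have [u _ opt_u] := A2 g g01 x.
rewrite (Vopt_gap hQ g_gt0 g_lt1 opt_u).
by rewrite (le_trans _ (qform_le_cost f hQ g_gt0 u x)) ?lee_fin.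
Qed.
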